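(* The function $g_{np}$ is $\mathbb{S}$-nearly periodic.
   Context: For an integer $x>0$ with binary expansion $x=\sum_{j\ge0}a_j2^j$, $a_j\in\{0,1\}$, let $i_x=\min\{j: a_j=1\}$. Define $g_{np}:\mathbb{Z}_{\ge0}\to\mathbb{R}$ by $g_{np}(0)=0$ and $g_{np}(x)=2^{-i_x}$ for $x>0$. A function $f:\mathbb{R}_{\ge0}\to\mathbb{R}_{\ge0}$ is sub-polynomial if for every $\alpha>0$, $\lim_{x\to\infty}x^\alpha f(x)=\infty$ and $\lim_{x\to\infty}x^{-\alpha}f(x)=0$. For a set $\mathcal{S}$ of functions, $g$ is $\mathcal{S}$-nearly periodic if (1) there is $\alpha>0$ such that for every $N>0$ there exist $x,y\in\mathbb{N}$, $x<y$, $y\ge N$ with $g(y)\le g(x)/y^\alpha$ (such $y$ is called an $\alpha$-period of $g$); and (2) for every $\alpha>0$ and every $h\in\mathcal{S}$ there is $N_1>0$ such that for all $\alpha$-periods $y\ge N_1$ and all $x<y$ with $g(y)y^\alpha\le g(x)$, $|g(x+y)-g(x)|\le \min\{g(x),g(x+y)\}h(y)$. $\mathbb{S}$ denotes the set of non-increasing sub-polynomial functions on $\mathbb{Z}_{\ge0}$. *)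

From Stdlib Require Import Reals Lra Lia PArith.
Open Scope R_scope.

(* Number of trailing zero bits of a positive binary number p, i.e. the
   least j with a_j = 1 in the binary expansion p = sum a_j 2^j. *)
Fixpoint pos_tz (p : positive) : nat :=
  match p with
  | xO q => S (pos_tz q)
  | _ => O
  end.

Definition i_of (x : nat) : nat := pos_tz (Pos.of_nat x).

Definition g_np (x : nat) : R :=
  match x with
  | O => 0
  | S _ => / (2 ^ i_of x)
  end.

(* y^alpha for natural y and real alpha (only used with y >= 1). *)
Definition npow (y : nat) (alpha : R) : R := Rpower (INR y) alpha.

Definition sub_polynomial (f : nat -> R) : Prop :=
  (forall n, 0 <= f n) /\
  (forall alpha, 0 < alpha ->
     (forall M : R, exists N : nat, forall n : nat, (N <= n)%nat ->
        M < npow n alpha * f n)) /\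
  (forall alpha, 0 < alpha ->
     (forall eps : R, 0 < eps -> exists N : nat, forall n : nat, (N <= n)%nat ->
        Rabs (npow n (- alpha) * f n) < eps)).

Definition non_increasing (f : nat -> R) : Prop :=
  forall m n : nat, (m <= n)%nat -> f n <= f m.

Definition SS (h : nat -> R) : Prop := non_increasing h /\ sub_polynomial h.

Definition alpha_period (g : nat -> R) (alpha : R) (y : nat) : Prop :=
  exists x : nat, (x < y)%nat /\ g y <= g x / npow y alpha.

Definition nearly_periodic (S : (nat -> R) -> Prop) (g : nat -> R) : Prop :=
  (exists alpha, 0 < alpha /\
     forall N : R, 0 < N -> exists x y : nat, (x < y)%nat /\ N <= INR y /\
        g y <= g x / npow y alpha) /\
  (forall alpha, 0 < alpha -> forall h, S h ->
     exists N1 : R, 0 < N1 /\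
       forall y : nat, alpha_period g alpha y -> N1 <= INR y ->
       forall x : nat, (x < y)%nat -> g y * npow y alpha <= g x ->
         Rabs (g (x + y)%nat - g x) <= Rmin (g x) (g (x + y)%nat) * h y).

(** The dyadic valuation obeys [i_(x+y) = i_x] whenever [i_x < i_y]: adding a
    number with more trailing zero bits does not change the lowest set bit.
    An α-period [y] with [g(y) y^α <= g(x)] and [y >= 2] forces [g(y) < g(x)],
    i.e. [x > 0] and [i_x < i_y]; hence [g(x+y) = g(x)] exactly and condition (2)
    holds with any nonnegative [h].  Condition (1) is witnessed by [x = 1] and
    the powers [y = 2^n], for which [g(2^n) = 1/2^n = g(1)/y]. *)
From Stdlib Require Import Reals Lra Lia PArith.
Open Scope R_scope.

Lemma pos_tz_add (p q : positive) :
  (pos_tz p < pos_tz q)%nat -> pos_tz (p + q) = pos_tz p.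
Proof.
  revert q; induction p as [p IH|p IH|]; intros [q|q|] Hlt; simpl in *;
    try lia; try reflexivity; f_equal; apply IH; lia.
Qed.

Lemma i_of_add (x y : nat) :
  (0 < x)%nat -> (0 < y)%nat -> (i_of x < i_of y)%nat -> i_of (x + y) = i_of x.
Proof.
  intros Hx Hy Hlt; unfold i_of in *.
  rewrite Nat2Pos.inj_add by lia; now apply pos_tz_add.
Qed.

Lemma i_of_pow2 (n : nat) : i_of (2 ^ n) = n.
Proof.
  unfold i_of; induction n as [|n IH]; [reflexivity|].
  assert (H2n : (2 ^ n <> 0)%nat) by (apply Nat.pow_nonzero; lia).
  rewrite Nat.pow_succ_r', Nat2Pos.inj_mul by lia.
  change (pos_tz (xO (Pos.of_nat (2 ^ n))) = S n); simpl; now rewrite IH.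
Qed.

Lemma g_np_pos_eq (x : nat) : (0 < x)%nat -> g_np x = / 2 ^ i_of x.
Proof. now destruct x; [lia|]. Qed.

Lemma g_np_pos (x : nat) : (0 < x)%nat -> 0 < g_np x.
Proof. intros Hx; rewrite g_np_pos_eq by exact Hx; apply Rinv_0_lt_compat, pow_lt; lra. Qed.

Lemma g_np_ge0 (x : nat) : 0 <= g_np x.
Proof. destruct x; [simpl; lra|]. left; apply g_np_pos; lia. Qed.

Lemma g_np_pow2 (n : nat) : g_np (2 ^ n) = / 2 ^ n.
Proof.
  rewrite g_np_pos_eq, i_of_pow2; [reflexivity|].
  apply Nat.neq_0_lt_0, Nat.pow_nonzero; lia.
Qed.

Lemma i_of_lt_of_g_np_lt (x y : nat) :
  (0 < y)%nat -> g_np y < g_np x -> (0 < x)%nat /\ (i_of x < i_of y)%nat.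
Proof.
  intros Hy Hg.
  assert (Hx : (0 < x)%nat) by (destruct x; [pose proof (g_np_ge0 y); simpl in Hg; lra | lia]).
  split; [exact Hx|].
  destruct (Nat.lt_ge_cases (i_of x) (i_of y)) as [Hlt|Hge]; [exact Hlt|].
  exfalso; revert Hg; apply Rle_not_lt.
  rewrite !g_np_pos_eq by assumption.
  apply Rinv_le_contravar; [apply pow_lt; lra|]; apply Rle_pow; lra || lia.
Qed.

Lemma g_np_add_of_lt (x y : nat) :
  (0 < y)%nat -> g_np y < g_np x -> g_np (x + y) = g_np x.
Proof.
  intros Hy Hg; destruct (i_of_lt_of_g_np_lt x y Hy Hg) as [Hx Hlt].
  rewrite !g_np_pos_eq, i_of_add by lia; reflexivity.
Qed.

Lemma npow_1 (y : nat) : (0 < y)%nat -> npow y 1 = INR y.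
Proof. intros Hy; apply Rpower_1, lt_0_INR, Hy. Qed.

Lemma npow_gt1 (y : nat) (alpha : R) : (2 <= y)%nat -> 0 < alpha -> 1 < npow y alpha.
Proof.
  intros Hy Ha; unfold npow.
  assert (H1y : 1 < INR y) by (apply (le_INR 2) in Hy; simpl in Hy; lra).
  rewrite <- (Rpower_O (INR y)) by lra; now apply Rpower_lt.
Qed.

Lemma g_np_pow2_period (n : nat) :
  (0 < n)%nat -> g_np (2 ^ n) <= g_np 1 / npow (2 ^ n) 1.
Proof.
  intros Hn.
  assert (H2n : (0 < 2 ^ n)%nat) by (apply Nat.neq_0_lt_0, Nat.pow_nonzero; lia).
  rewrite npow_1, pow_INR, g_np_pow2 by exact H2n.
  simpl; unfold Rdiv; rewrite Rinv_1, Rmult_1_l; right; f_equal; ring.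
Qed.

Theorem proposition53 : nearly_periodic SS g_np.
Proof.
  split.
  - exists 1; split; [lra|]; intros N HN.
    destruct (INR_unbounded N) as [n Hn].
    assert (Hn0 : (0 < n)%nat) by (destruct n; simpl in Hn; lra || lia).
    assert (Hn2 : (n < 2 ^ n)%nat) by (apply Nat.pow_gt_lin_r; lia).
    exists 1%nat, (2 ^ n)%nat; repeat split.
    + lia.
    + apply lt_INR in Hn2; lra.
    + now apply g_np_pow2_period.
  - intros alpha Ha h [_ [Hh_nonneg _]]; exists 2; split; [lra|].
    intros y _ Hy x _ Hxy.
    assert (Hy2 : (2 <= y)%nat) by (apply INR_le; simpl; lra).
    assert (Hlt : g_np y < g_np x).
    { pose proof (npow_gt1 y alpha Hy2 Ha); pose proof (g_np_pos y ltac:(lia)); nra. }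
    rewrite g_np_add_of_lt, Rminus_diag, Rabs_R0, Rmin_left by lia || lra.
    apply Rmult_le_pos; [apply g_np_ge0 | apply Hh_nonneg].
Qed.
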